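(* Let $H_0$ be a bounded operator on a Hilbert space with finite-dimensional kernel, admitting a bounded reflexive generalized inverse $H_0^{(-1)}$, and suppose $\|H_0\|=1$. Let $W=\lambda w$ with $w$ bounded, $\|w\|=1$, $\lambda\ge0$ real, and $\lambda<1/\varkappa(H_0,H_0^{(-1)})$. Then $\dim\mathrm{Ker}(H_0+W)\le\dim\mathrm{Ker}\,H_0$. If moreover equality holds, then $$\mathrm{Ker}(H_0+W)=(I+H_0^{(-1)}W)^{-1}\,\mathrm{Ker}\,H_0 .$$
   Context: A reflexive generalized inverse of $H_0$ is an operator $H_0^{(-1)}$ with $H_0^{(-1)}H_0H_0^{(-1)}=H_0^{(-1)}$ and $H_0H_0^{(-1)}H_0=H_0$. The generalized condition number is $\varkappa(H_0,H_0^{(-1)}):=\|H_0\|\,\|H_0^{(-1)}\|$. *)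

From HB Require Import structures.
From mathcomp Require Import all_boot all_order all_algebra.
From mathcomp Require Import all_classical all_reals all_analysis.
From mathcomp Require Import complex.
Set Implicit Arguments. Unset Strict Implicit. Unset Printing Implicit Defensive.
Import Order.TTheory GRing.Theory Num.Theory.
Import numFieldNormedType.Exports.
Local Open Scope ring_scope.
Local Open Scope classical_set_scope.
Local Open Scope complex_scope.

Definition hilbert_ip (R : realType) (V : completeNormedModType R[i])
    (ip : V -> V -> R[i]) : Prop :=
  [/\ (forall (a : R[i]) (x y z : V), ip (a *: x + y) z = a * ip x z + ip y z),
      (forall x y : V, ip y x = (ip x y)^*) &
      (forall x : V, (`|x| : R[i]) ^+ 2 = ip x x)].

Definition is_opnorm (R : realType) (V : normedModType R[i]) (f : V -> V)
    (c : R[i]) : Prop :=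
  (forall x : V, `|f x| <= c * `|x|) /\
  (forall c' : R[i], (forall x : V, `|f x| <= c' * `|x|) -> c <= c').

Definition bounded_op (R : realType) (V : normedModType R[i]) (f : V -> V) :=
  exists c, is_opnorm f c.

Definition ker (R : realType) (V : normedModType R[i]) (f : V -> V) : set V :=
  [set x | f x = 0].

Definition has_dim (R : realType) (V : normedModType R[i]) (S : set V)
    (n : nat) : Prop :=
  exists b : 'I_n -> V,
    (forall c : 'I_n -> R[i], \sum_(i < n) c i *: b i = 0 -> forall i, c i = 0) /\
    S = [set x | exists c : 'I_n -> R[i], x = \sum_(i < n) c i *: b i].

Definition refl_ginv (R : realType) (V : normedModType R[i]) (H G : V -> V) :=
  (forall x, G (H (G x)) = G x) /\ (forall x, H (G (H x)) = H x).

From HB Require Import structures.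
From mathcomp Require Import all_boot all_order all_algebra.
From mathcomp Require Import all_classical all_reals all_analysis.
From mathcomp Require Import complex.
From mathcomp Require Import lra.
Import Order.TTheory GRing.Theory Num.Theory.
Import numFieldNormedType.Exports.
Local Open Scope ring_scope.
Local Open Scope classical_set_scope.
Local Open Scope complex_scope.
Set Implicit Arguments. Unset Strict Implicit. Unset Printing Implicit Defensive.

(* Put W = lambda w and T = I + H0^(-1) W.  Since |H0^(-1) W x| <= q |x| with
   q = lambda |H0^(-1)| < 1, the operator T is a bijection of V: injective
   because x = - H0^(-1) W x forces |x| <= q |x|, and onto by Banach's fixed
   point theorem applied to z |-> y - H0^(-1) W z.  On Ker (H0 + W) we have
   W x = - H0 x, so H0 (T x) = H0 x - H0 H0^(-1) H0 x = 0: T maps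
   Ker (H0 + W) injectively and linearly into the n-dimensional Ker H0.
   Linear algebra then gives dim Ker (H0 + W) <= n, with T onto Ker H0 in
   case of equality, i.e. Ker (H0 + W) = T^(-1) Ker H0. *)

Section RealNorm.
Variables (R : realType) (V : normedModType R[i]).

(* The norm of V is a nonnegative real element of R[i]; rnorm reads it in R,
   where the order is total and linear arithmetic applies. *)
Definition rnorm (x : V) : R := complex.Re `|x|.

Lemma rnormE (x : V) : `|x| = (rnorm x)%:C.
Proof. by rewrite /rnorm complex.RRe_real // ger0_real. Qed.

Lemma rnorm_ge0 (x : V) : 0 <= rnorm x.
Proof. by rewrite -ler0c -rnormE. Qed.

Lemma rnorm0 : rnorm 0 = 0.
Proof. by rewrite /rnorm normr0. Qed.

Lemma rnormN (x : V) : rnorm (- x) = rnorm x.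
Proof. by rewrite /rnorm normrN. Qed.

Lemma rnormB (x y : V) : rnorm (x - y) = rnorm (y - x).
Proof. by rewrite -rnormN opprB. Qed.

Lemma rnormD (x y : V) : rnorm (x + y) <= rnorm x + rnorm y.
Proof. by rewrite -lecR raddfD /= -!rnormE ler_normD. Qed.

Lemma rnorm_eq0 (x : V) : rnorm x = 0 -> x = 0.
Proof. by move=> x0; apply/normr0_eq0; rewrite rnormE x0. Qed.

Lemma rnormZ (c : R) (x : V) : rnorm (c%:C *: x) = `|c| * rnorm x.
Proof.
apply: complexI; rewrite rmorphM /= -!rnormE normrZ.
by rewrite normc_def /= expr0n /= addr0 sqrtr_sqr.
Qed.

Lemma opnorm_rnorm (f : V -> V) (c : R) :
  is_opnorm f c%:C -> forall x, rnorm (f x) <= c * rnorm x.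
Proof. by move=> [fc _] x; rewrite -lecR rmorphM /= -!rnormE; apply: fc. Qed.

End RealNorm.

Section ContractionFixedPoint.
Variables (R : realType) (V : completeNormedModType R[i]) (f : V -> V) (q : R).
Hypotheses (q_ge0 : 0 <= q) (q_lt1 : q < 1)
  (f_lip : forall u v, rnorm (f u - f v) <= q * rnorm (u - v)).
Variable x0 : V.

Let one_sub_q_gt0 : 0 < 1 - q. Proof. by rewrite subr_gt0. Qed.
Let one_add_q_gt0 : 0 < 1 + q. Proof. by rewrite ltr_wpDr. Qed.

Local Notation x k := (iter k f x0).
Local Notation C := (rnorm (f x0 - x0)).

Lemma picard_step k : rnorm (x k.+1 - x k) <= q ^+ k * C.
Proof.
elim: k => [|k IH]; first by rewrite expr0 mul1r.
rewrite exprS -mulrA; apply: (le_trans (f_lip _ _)).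
exact: ler_wpM2l.
Qed.

(* Summing the geometric steps: the iterates from index n on stay within
   q^n C / (1 - q) of x n. *)
Lemma picard_dist n m : (1 - q) * rnorm (x (n + m)%N - x n) <= q ^+ n * C.
Proof.
have C0 := rnorm_ge0 (f x0 - x0).
have qn0 : 0 <= q ^+ n := exprn_ge0 n q_ge0.
suff : (1 - q) * rnorm (x (n + m)%N - x n) <= q ^+ n * (1 - q ^+ m) * C.
  by have := mulr_ge0 (mulr_ge0 qn0 (exprn_ge0 m q_ge0)) C0; nra.
elim: m => [|m IH]; first by rewrite addn0 subrr rnorm0 expr0 subrr !mulr0 mul0r.
have tri := rnormD (x (n + m).+1 - x (n + m)%N) (x (n + m)%N - x n).
rewrite addrA subrK in tri.
have step := picard_step (n + m); rewrite exprD in step.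
have := ler_wpM2l (ltW one_sub_q_gt0) tri; have := ler_wpM2l (ltW one_sub_q_gt0) step.
rewrite addnS exprS; lra.
Qed.

(* Hence the iterates form a Cauchy sequence, which converges since V is
   complete. *)
Lemma picard_cvg : cvgn (fun k => x k).
Proof.
apply/cauchy_cvgP; apply/cauchy_ballP => e e0.
have er : e = (complex.Re e)%:C by rewrite complex.RRe_real // gtr0_real.
set r := complex.Re e in er.
have r0 : 0 < r by rewrite -ltcR -er.
have rq0 : 0 < r * (1 - q) by rewrite mulr_gt0.
have /cvgr_dist_lt /(_ _ rq0) [N _ qN] : (fun k => q ^+ k * C) @ \oo --> (0 : R).
  rewrite -(mul0r C); apply: cvgM; last exact: cvg_cst.
  by apply: cvg_expr; rewrite ger0_norm.
have close n m : (N <= n <= m)%N -> rnorm (x m - x n) < r.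
  move=> /andP[Nn /subnKC <-]; have := qN n Nn.
  rewrite sub0r normrN ger0_norm ?mulr_ge0 ?exprn_ge0 ?rnorm_ge0 // => qnC.
  have := picard_dist n (m - n); nra.
near_simpl; exists ([set n | (N <= n)%N], [set n | (N <= n)%N]).
  by split; exists N.
move=> [n m] [/= Nn Nm]; rewrite -ball_normE /= er rnormE ltcR.
case: (leqP n m) => nm; first by rewrite rnormB; apply: close; rewrite Nn.
by apply: close; rewrite Nm ltnW.
Qed.

Lemma picard_limit_fixed : f (limn (fun k => x k)) = limn (fun k => x k).
Proof.
set l := limn _; have xl : (fun k => x k) @ \oo --> l := picard_cvg.
apply/eqP; rewrite -subr_eq0; apply/eqP/rnorm_eq0/eqP.
rewrite eq_le rnorm_ge0 andbT; apply/ler_addgt0Pr => e e0.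
have e0' : 0 < (e / (1 + q))%:C by rewrite ltcR divr_gt0.
move/cvgr_dist_lt: xl => /(_ _ e0') [N _ xN].
have := xN N.+1 (leqnSn N); have := xN N (leqnn N).
rewrite !rnormE !ltcR => lN lN1.
have -> : f l - l = (f l - f (x N)) + (x N.+1 - l) by rewrite /= addrA subrK.
apply: (le_trans (rnormD _ _)); have := f_lip l (x N).
have -> : e = (1 + q) * (e / (1 + q)) by rewrite mulrC divfK ?gt_eqF.
have := ler_wpM2l q_ge0 (ltW lN); rewrite [rnorm (x N.+1 - l)]rnormB; lra.
Qed.

End ContractionFixedPoint.

Lemma contraction_fixed_point (R : realType) (V : completeNormedModType R[i])
    (f : V -> V) (q : R) :
  0 <= q -> q < 1 -> (forall u v, rnorm (f u - f v) <= q * rnorm (u - v)) ->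
  exists p, f p = p.
Proof.
move=> q0 q1 fq; exists (limn (fun k => iter k f 0)).
exact: picard_limit_fixed q0 q1 fq 0.
Qed.

Section SmallPerturbation.
Variables (R : realType) (V : completeNormedModType R[i]) (A : {additive V -> V}).
Variable q : R.
Hypotheses (q_ge0 : 0 <= q) (q_lt1 : q < 1)
  (A_small : forall x, rnorm (A x) <= q * rnorm x).

(* I + A has trivial kernel: x = - A x would force |x| <= q |x|. *)
Lemma perturbation_injective : injective (fun x => x + A x).
Proof.
move=> x y /eqP; rewrite -subr_eq0 opprD addrACA -raddfB addr_eq0 => /eqP Ad.
apply/subr0_eq/rnorm_eq0/eqP; rewrite eq_le rnorm_ge0 andbT.
have := A_small (x - y); rewrite -rnormN -Ad.
have := rnorm_ge0 (x - y); have : 0 < 1 - q by rewrite subr_gt0.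
nra.
Qed.

(* I + A is onto: x + A x = y means x is a fixed point of the contraction
   z |-> y - A z. *)
Lemma perturbation_surjective (y : V) : exists x, x + A x = y.
Proof.
have lip u v : rnorm ((y - A u) - (y - A v)) <= q * rnorm (u - v).
  by rewrite opprB addrC addrA subrK -raddfB (rnormB u v); exact: A_small.
have [x xfix] := contraction_fixed_point q_ge0 q_lt1 lip.
by exists x; rewrite -{1}xfix subrK.
Qed.

Lemma perturbation_bijective : bijective (fun x => x + A x).
Proof.
have [Ainv AinvK] := choice perturbation_surjective.
apply: (Bijective _ AinvK) => x.
by apply: perturbation_injective; rewrite AinvK.
Qed.

End SmallPerturbation.

Definition subspace (K : pzRingType) (M : lmodType K) (S : set M) : Prop :=
  S 0 /\ forall (a : K) (x y : M), S x -> S y -> S (a *: x + y).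

Lemma subspace_lincomb (K : pzRingType) (M : lmodType K) (S : set M) :
  subspace S -> forall k (c : 'I_k -> K) (u : 'I_k -> M),
  (forall i, S (u i)) -> S (\sum_(i < k) c i *: u i).
Proof.
move=> [S0 Sl] k c u Su; apply: big_ind => //.
  by move=> x y Sx Sy; rewrite -[x]scale1r; apply: Sl.
by move=> i _; rewrite -[_ *: _]addr0; apply: Sl.
Qed.

Lemma ker_subspace (R : realType) (V : normedModType R[i]) (f : {linear V -> V}) :
  subspace (ker f).
Proof.
split; first by rewrite /ker /= linear0.
by move=> a x y; rewrite /ker /= linearP => -> ->; rewrite scaler0 addr0.
Qed.

(* In a finite-dimensional space every subspace is a {vspace}: take a
   subspace of maximal dimension contained in P; adding any v in P to it
   cannot increase its dimension, so v already lies in it. *)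
Lemma subspace_vspace (K : fieldType) (vT : vectType K) (P : set vT) :
  subspace P -> exists U : {vspace vT}, forall v, v \in U <-> P v.
Proof.
move=> [P0 Pl].
pose inP (U : {vspace vT}) := forall v, v \in U -> P v.
pose D k := `[< exists U, inP U /\ \dim U = k >].
have D0 : exists k, D k.
  exists 0%N; apply/asboolP; exists 0%VS; split; last exact: dimv0.
  by move=> v; rewrite memv0 => /eqP ->.
have Dle k : D k -> (k <= \dim (fullv : {vspace vT}))%N.
  by move=> /asboolP [U [_ <-]]; exact: dimvS (subvf U).
have [_ /asboolP [U [UP <-]] Umax] := ex_maxnP D0 Dle.
exists U => v; split; first exact: UP.
move=> Pv; have UvP : inP (U + <[v]>)%VS.
  move=> u /memv_addP [u1 u1U [u2 /vlineP [k ->] ->]].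
  by rewrite addrC; apply: Pl => //; apply: UP.
have /eqP -> : U == (U + <[v]>)%VS.
  by rewrite eqEdim addvSl Umax //; apply/asboolP; exists (U + <[v]>)%VS.
exact: subvP (addvSr U <[v]>) _ (memv_line v).
Qed.

Section Coordinates.
Variables (R : realType) (V : normedModType R[i]) (n : nat) (b : 'I_n -> V).

Definition lincomb (v : 'rV[R[i]]_n) : V := \sum_(j < n) v 0 j *: b j.

Lemma lincomb_is_linear : linear lincomb.
Proof.
move=> a u v; rewrite /lincomb scaler_sumr -big_split /=.
by apply: eq_bigr => j _; rewrite !mxE scalerDl scalerA.
Qed.

HB.instance Definition _ :=
  GRing.isLinear.Build R[i] 'rV[R[i]]_n V *:%R lincomb lincomb_is_linear.

Lemma lincomb_row (c : 'I_n -> R[i]) :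
  lincomb (\row_j c j) = \sum_(j < n) c j *: b j.
Proof. by apply: eq_bigr => j _; rewrite mxE. Qed.

Lemma lincomb_inj :
  (forall c : 'I_n -> R[i], \sum_(i < n) c i *: b i = 0 -> forall i, c i = 0) ->
  injective lincomb.
Proof.
move=> b_free u v /eqP; rewrite -subr_eq0 -linearB => /eqP uv0.
by apply/subr0_eq/rowP => j; rewrite [RHS]mxE; exact: b_free (fun j => (u - v) 0 j) uv0 j.
Qed.

End Coordinates.

Section InjectiveImage.
Variables (R : realType) (V : normedModType R[i]) (S : set V).
Variables (T : {linear V -> V}) (n : nat) (b : 'I_n -> V).
Hypotheses (S_sub : subspace S) (T_inj : injective T)
  (b_free : forall c : 'I_n -> R[i], \sum_(i < n) c i *: b i = 0 -> forall i, c i = 0)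
  (T_span : forall x, S x -> exists v, T x = lincomb b v).

Definition image_coords : set 'rV[R[i]]_n :=
  [set v | exists2 x, S x & T x = lincomb b v].

Lemma image_coords_subspace : subspace image_coords.
Proof.
have [S0 Sl] := S_sub; split; first by exists 0; rewrite ?linear0.
move=> a u v [x Sx Tx] [y Sy Ty]; exists (a *: x + y); first exact: Sl.
by rewrite !linearP Tx Ty.
Qed.

Variable U : {vspace 'rV[R[i]]_n}.
Hypothesis U_coords : forall v, v \in U <-> image_coords v.

(* Pulling a basis of U back through lincomb and T gives a basis of S. *)
Lemma has_dim_pullback : has_dim S (\dim U).
Proof.
pose vb := vbasis U.
have vbS (i : 'I_(\dim U)) : exists xi, S xi /\ T xi = lincomb b vb`_i.
  have /U_coords [xi Sxi Txi] : vb`_i \in U.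
    by apply: vbasis_mem; apply: mem_nth; rewrite /vb size_tuple.
  by exists xi.
have [xs xsS] := choice vbS.
have Txs c : T (\sum_(i < \dim U) c i *: xs i) = lincomb b (\sum_(i < \dim U) c i *: vb`_i).
  by rewrite !linear_sum; apply: eq_bigr => i _; rewrite !linearZ (xsS i).2.
have vb_free : free vb := basis_free (vbasisP U).
exists xs; split.
  move=> c /(congr1 T); rewrite Txs linear0 -(linear0 (lincomb b)).
  by move/(lincomb_inj b_free); apply/freeP.
apply/seteqP; split => [x Sx | _ [c ->]]; last first.
  by apply: subspace_lincomb => // i; exact: (xsS i).1.
have [v Tx] := T_span Sx.
have /coord_vbasis vE : v \in U by apply/U_coords; exists x.
by exists (fun i => coord vb i v); apply: T_inj; rewrite Txs -vE.
Qed.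

Lemma pullback_full : \dim U = n -> forall v, exists2 x, S x & T x = lincomb b v.
Proof.
move=> dimU v; apply/U_coords.
have -> : U = fullv.
  by apply/eqP; rewrite eqEdim subvf dimvf dim_matrix mul1r dimU leqnn.
exact: memvf.
Qed.

End InjectiveImage.

Lemma dim_le_of_injective (R : realType) (V : normedModType R[i])
    (S K0 : set V) (T : {linear V -> V}) (n : nat) :
  subspace S -> has_dim K0 n -> (forall x, S x -> K0 (T x)) -> injective T ->
  exists m, has_dim S m /\ (m <= n)%N /\ (m = n -> K0 `<=` T @` S).
Proof.
move=> S_sub [b [b_free K0E]] ST T_inj.
have T_span x : S x -> exists v, T x = lincomb b v.
  by move=> /ST; rewrite K0E => -[c ->]; exists (\row_j c j); rewrite lincomb_row.
have [U U_coords] := subspace_vspace (image_coords_subspace T b S_sub).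
exists (\dim U); split; first exact: has_dim_pullback U_coords.
split; first by have := dimvS (subvf U); rewrite dimvf dim_matrix mul1r.
move=> dimU y; rewrite K0E => -[c ->].
have [x Sx Tx] := pullback_full U_coords dimU (\row_j c j).
by exists x; rewrite // Tx lincomb_row.
Qed.

(* Where H G H = H, the map x |-> x + G (W x) sends Ker (H + W) into Ker H:
   on Ker (H + W) we have W x = - H x, and H G H x = H x. *)
Lemma perturbed_kernel_into (M : zmodType) (H G W : {additive M -> M}) :
  (forall x, H (G (H x)) = H x) ->
  forall x, H x + W x = 0 -> H (x + G (W x)) = 0.
Proof.
move=> HGH x /eqP; rewrite addrC addr_eq0 => /eqP ->.
by rewrite raddfD !raddfN HGH subrr.
Qed.

(* If lambda < 1 / |G| and |w| = 1, then x |-> G (lambda w x) is a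
   contraction, with constant lambda |G| < 1. *)
Lemma scaled_composite_small (R : realType) (V : normedModType R[i])
    (G w : V -> V) (g : R[i]) (lambda : R) :
  is_opnorm G g -> is_opnorm w 1 -> 0 <= lambda -> lambda%:C < 1 / g ->
  exists q, [/\ 0 <= q, q < 1 &
    forall x, rnorm (G (lambda%:C *: w x)) <= q * rnorm x].
Proof.
move=> Gg w1 l0 lt.
have g0 : 0 < g by rewrite -invr_gt0 -div1r; apply: le_lt_trans lt; rewrite ler0c.
have gE : g = (complex.Re g)%:C by rewrite complex.RRe_real // gtr0_real.
set gr := complex.Re g in gE; rewrite gE in Gg g0 lt.
have gr0 : 0 < gr by rewrite -ltcR.
rewrite div1r -fmorphV ltcR in lt.
exists (lambda * gr); split; first exact: mulr_ge0 l0 (ltW gr0).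
  by rewrite -ltr_pdivlMr // div1r.
move=> x; apply: (le_trans (opnorm_rnorm Gg _)).
rewrite rnormZ ger0_norm // mulrCA mulrA ler_wpM2l ?mulr_ge0 ?(ltW gr0) //.
by have := opnorm_rnorm w1 x; rewrite mul1r.
Qed.

Theorem mainTheorem11 (R : realType) (V : completeNormedModType R[i])
  (ip : V -> V -> R[i]) (H0 G w : {linear V -> V}) (n : nat)
  (h0 g : R[i]) (lambda : R) :
  hilbert_ip ip ->
  is_opnorm H0 h0 -> has_dim (ker H0) n ->
  refl_ginv H0 G -> is_opnorm G g ->
  h0 = 1 ->
  is_opnorm w 1 ->
  0 <= lambda -> lambda%:C < 1 / (h0 * g) ->
  exists m : nat,
    has_dim (ker (fun x => H0 x + lambda%:C *: w x)) m /\ (m <= n)%N /\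
    (m = n ->
     exists Tinv : V -> V,
       cancel (fun x => x + G (lambda%:C *: w x)) Tinv /\
       cancel Tinv (fun x => x + G (lambda%:C *: w x)) /\
       ker (fun x => H0 x + lambda%:C *: w x) = Tinv @` ker H0).
Proof.
move=> _ _ dimK0 [_ HGH] Gg -> w1 l0; rewrite [1 * g]mul1r => lt.
pose W : {linear V -> V} := lambda%:C \*: w.
pose T : {linear V -> V} := idfun \+ (G \o W).
have [q [q0 q1 Wsmall]] := scaled_composite_small Gg w1 l0 lt.
have [Tinv TK TinvK] := @perturbation_bijective _ _ (G \o W) _ q0 q1 Wsmall.
have into x : ker (H0 \+ W) x -> ker H0 (T x) := perturbed_kernel_into (W := W) HGH (x := x).
have [m [dimS [le_mn full]]] :=
  dim_le_of_injective (ker_subspace (H0 \+ W)) dimK0 into (can_inj TK).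
exists m; split=> //; split=> // /full onto.
exists Tinv; split=> //; split=> //.
apply/seteqP; split=> [x Sx | _ [y /onto [x Sx <-] <-]]; last by rewrite TK.
by exists (T x); [exact: into | exact: TK].
Qed.
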